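(* The function $f:(0,\infty)\to\mathbb{R}$, $f(x)=\sin(\log x)$, is amenable.
   Context: Relative distance on $\mathbb{R}$: $\mathrm{dist}(x,y)=0$ if $x=y=0$, $\mathrm{dist}(x,y)=|\log(y/x)|$ if $xy>0$, and $\mathrm{dist}(x,y)=\infty$ otherwise. For a real analytic function $f$ on an open set $\Omega\subseteq\mathbb{R}$, not identically zero, the condition number is $\kappa(f,x)=0$ if $x=0$, $\kappa(f,x)=\infty$ if $x\neq0$ and $f(x)=0$, and $\kappa(f,x)=|x|\,|f'(x)|/|f(x)|$ otherwise; $\mu(f,x)=1+\kappa(f,x)$. $f:\Omega\to\mathbb{R}$ is amenable if there is $C>0$ such that for every $x\in\Omega$ with $\kappa(f,x)<\infty$, the set $B_x=\{y\in\mathbb{R}:\mathrm{dist}(y,x)<1/(C\mu(f,x))\}$ is contained in $\Omega$ and $\mu(f,y)\leq C\mu(f,x)$ for all $y\in B_x$. *)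

From Stdlib Require Import Reals.
From Coquelicot Require Import Coquelicot.
Open Scope R_scope.

Definition reldist (x y : R) : Rbar :=
  if Req_EM_T x 0 then
    (if Req_EM_T y 0 then Finite 0 else p_infty)
  else if Rlt_dec 0 (x * y) then Finite (Rabs (ln (y / x)))
  else p_infty.

Definition kappa (f : R -> R) (x : R) : Rbar :=
  if Req_EM_T x 0 then Finite 0
  else if Req_EM_T (f x) 0 then p_infty
  else Finite (Rabs x * Rabs (Derive f x) / Rabs (f x)).

Definition mu (f : R -> R) (x : R) : Rbar := Rbar_plus (Finite 1) (kappa f x).

(* f : Omega -> R is amenable.  When kappa(f,x) < oo, mu(f,x) is finite, so
   real (mu f x) is its value. *)
Definition amenable (Omega : R -> Prop) (f : R -> R) : Prop :=
  exists C : R, 0 < C /\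
    forall x : R, Omega x -> Rbar_lt (kappa f x) p_infty ->
      (forall y : R, Rbar_lt (reldist y x) (Finite (1 / (C * real (mu f x)))) ->
         Omega y) /\
      (forall y : R, Rbar_lt (reldist y x) (Finite (1 / (C * real (mu f x)))) ->
         Rbar_le (mu f y) (Finite (C * real (mu f x)))).

(* In the logarithmic coordinate t = ln x the relative distance becomes |s - t|, and the
   condition number of sin (ln x) is |cot t|, so mu = 1 + |cos t| / |sin t|.  As
   |sin t| + |cos t| >= 1, mu >= 1 / |sin t|; a ball of radius 1 / (3 mu) therefore
   moves t by at most |sin t| / 3, and since sin is 1-Lipschitz, |sin| stays above
   2 |sin t| / 3 on it.  This bounds mu on the ball by 1 + 3 / (2 |sin t|) <= 3 mu. *)
From Stdlib Require Import Reals Lra Psatz.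
From Coquelicot Require Import Coquelicot.
Open Scope R_scope.

Lemma Rabs_le_1_cos t : Rabs (cos t) <= 1.
Proof. apply Rabs_le. pose proof (COS_bound t). lra. Qed.

Lemma sin_lipschitz a b : Rabs (sin a - sin b) <= Rabs (a - b).
Proof.
  destruct (MVT_abs sin cos b a) as [c [-> _]].
  { intros c _. apply derivable_pt_lim_sin. }
  pose proof (Rabs_le_1_cos c).
  pose proof (Rabs_pos (a - b)). nra.
Qed.

Lemma Rabs_sin_add_Rabs_cos_ge1 t : 1 <= Rabs (sin t) + Rabs (cos t).
Proof.
  pose proof (sin2_cos2 t) as E. rewrite (Rsqr_abs (sin t)), (Rsqr_abs (cos t)) in E.
  unfold Rsqr in E. pose proof (Rabs_pos (sin t)). pose proof (Rabs_pos (cos t)). nra.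
Qed.

Definition mu_sin (t : R) : R := 1 + Rabs (cos t) / Rabs (sin t).

Lemma inv_Rabs_sin_le_mu_sin t : sin t <> 0 -> / Rabs (sin t) <= mu_sin t.
Proof.
  intros Hs. assert (0 < Rabs (sin t)) by (apply Rabs_pos_lt; exact Hs).
  pose proof (Rabs_sin_add_Rabs_cos_ge1 t).
  unfold mu_sin. apply (Rmult_le_reg_r (Rabs (sin t))); [assumption|].
  field_simplify; lra.
Qed.

Lemma mu_sin_le_inv_Rabs_sin t : sin t <> 0 -> mu_sin t <= 2 / Rabs (sin t).
Proof.
  intros Hs. assert (0 < Rabs (sin t)) by (apply Rabs_pos_lt; exact Hs).
  assert (Rabs (sin t) <= 1) by (apply Rabs_le; pose proof (SIN_bound t); lra).
  pose proof (Rabs_le_1_cos t).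
  unfold mu_sin. apply (Rmult_le_reg_r (Rabs (sin t))); [assumption|].
  field_simplify; lra.
Qed.

Lemma Rabs_sin_near t s :
  Rabs (s - t) <= Rabs (sin t) / 3 -> 2 * Rabs (sin t) / 3 <= Rabs (sin s).
Proof.
  intros Hst. pose proof (sin_lipschitz t s). pose proof (Rabs_triang_inv (sin t) (sin s)).
  rewrite Rabs_minus_sym in Hst. lra.
Qed.

Lemma mu_sin_near t s : sin t <> 0 -> Rabs (s - t) < / (3 * mu_sin t) ->
  sin s <> 0 /\ mu_sin s <= 3 * mu_sin t.
Proof.
  intros Ht Hst.
  set (a := Rabs (sin t)).
  assert (Ha : 0 < a) by (apply Rabs_pos_lt; exact Ht).
  pose proof (inv_Rabs_sin_le_mu_sin t Ht) as Hmu. fold a in Hmu.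
  assert (Hclose : Rabs (s - t) <= a / 3).
  { apply Rlt_le, (Rlt_le_trans _ _ _ Hst).
    rewrite Rinv_mult. unfold Rdiv. rewrite Rmult_comm.
    apply Rmult_le_compat_r; [lra|].
    rewrite <- (Rinv_inv a). apply Rinv_le_contravar; [|exact Hmu].
    apply Rinv_0_lt_compat, Ha. }
  pose proof (Rabs_sin_near t s Hclose) as Hs. fold a in Hs.
  assert (Hs0 : sin s <> 0).
  { intro E. rewrite E, Rabs_R0 in Hs. lra. }
  split; [exact Hs0|].
  eapply Rle_trans; [apply mu_sin_le_inv_Rabs_sin, Hs0|].
  assert (Hinv : / Rabs (sin s) <= / (2 * a / 3)) by (apply Rinv_le_contravar; lra).
  replace (/ (2 * a / 3)) with (3 / 2 * / a) in Hinv by (field; lra).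
  unfold Rdiv. lra.
Qed.

Lemma kappa_finite_neq0 f x :
  x <> 0 -> Rbar_lt (kappa f x) p_infty -> f x <> 0.
Proof.
  intros Hx Hk E. unfold kappa in Hk.
  destruct (Req_EM_T x 0); [contradiction|].
  destruct (Req_EM_T (f x) 0); [exact Hk | contradiction].
Qed.

Lemma reldist_lt_pos x y r :
  0 < x -> Rbar_lt (reldist y x) (Finite r) -> 0 < y /\ Rabs (ln y - ln x) < r.
Proof.
  intros Hx Hy. unfold reldist in Hy.
  destruct (Req_EM_T y 0).
  { destruct (Req_EM_T x 0); [lra | contradiction]. }
  destruct (Rlt_dec 0 (y * x)) as [Hyx|]; [|contradiction].
  assert (Hy0 : 0 < y) by nra.
  split; [exact Hy0|]. rewrite ln_div, Rabs_minus_sym in Hy by assumption. exact Hy.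
Qed.

Lemma mu_sin_ln x : 0 < x -> sin (ln x) <> 0 ->
  mu (fun x => sin (ln x)) x = Finite (mu_sin (ln x)).
Proof.
  intros Hx Hs. unfold mu, kappa, mu_sin.
  destruct (Req_EM_T x 0); [lra|].
  destruct (Req_EM_T (sin (ln x)) 0); [contradiction|].
  assert (HD : Derive (fun x => sin (ln x)) x = cos (ln x) / x).
  { apply is_derive_unique. auto_derive; [lra|]. field. lra. }
  rewrite HD. simpl. f_equal. f_equal.
  unfold Rdiv. rewrite Rabs_mult, Rabs_inv, (Rabs_pos_eq x) by lra.
  field. split; [apply Rabs_no_R0, Hs | lra].
Qed.

Theorem mainTheorem13 :
  amenable (fun x : R => 0 < x) (fun x : R => sin (ln x)).
Proof.
  exists 3. split; [lra|].
  intros x Hx Hk.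
  assert (Hs : sin (ln x) <> 0) by (apply (kappa_finite_neq0 (fun x => sin (ln x)) x); [lra | exact Hk]).
  rewrite (mu_sin_ln x Hx Hs). simpl real. rewrite Rdiv_1_l.
  split.
  - intros y Hy. apply (reldist_lt_pos x y _ Hx Hy).
  - intros y Hy.
    destruct (reldist_lt_pos x y _ Hx Hy) as [Hy0 Hdist].
    destruct (mu_sin_near _ _ Hs Hdist) as [Hsy Hmu].
    rewrite (mu_sin_ln y Hy0 Hsy). exact Hmu.
Qed.
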